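(* Let $n\ge 3$ and let $G_n$ be the directed graph whose vertex set is $S_n$ (permutations in one-line notation $[u(1),\dots,u(n)]$), with a directed edge $\mathbf{u}\to\mathbf{v}$ if and only if $\max_{i\in\{1,\dots,n\}}\bigl(v^{-1}(i)-u^{-1}(i)\bigr)=1$. If $D\subseteq S_n$ is a dominating set of $G_n$, i.e., every vertex $\mathbf{u}\notin D$ has an edge $\mathbf{u}\to\mathbf{v}$ to some $\mathbf{v}\in D$, then $$|D|\ \ge\ \frac{n!}{\frac{3}{4}\cdot 2^{n-1}}.$$
   Context: For a permutation $\mathbf{u}=[u(1),\dots,u(n)]$ in one-line notation, $u^{-1}(i)$ denotes the position of $i$ in the sequence. The quantity $\max_i(v^{-1}(i)-u^{-1}(i))$ is the rewriting cost of changing state $\mathbf{u}$ to state $\mathbf{v}$ via minimal-push-up operations. *)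

From mathcomp Require Import all_boot all_order all_algebra all_fingroup.
Set Implicit Arguments. Unset Strict Implicit. Unset Printing Implicit Defensive.
Import GRing.Theory Num.Theory.

(* A permutation u : 'S_n is read in one-line notation: position j holds u j
   (positions and values are 0-indexed; differences of positions are
   unaffected by the shift). *)
Definition pos n (u : 'S_n) (i : 'I_n) : int := (nat_of_ord ((u^-1)%g i))%:Z.

(* rewriting cost max_i (v^-1(i) - u^-1(i)); for n = 0 the max over the empty
   set is taken to be 0 (irrelevant since n >= 3). *)
Definition cost n (u v : 'S_n) : int :=
  \big[Order.max/0%R]_(i : 'I_n) (pos v i - pos u i)%R.

Definition edge n (u v : 'S_n) : bool := cost u v == 1%R.

Definition dominating n (D : {set 'S_n}) : Prop :=
  forall u : 'S_n, u \notin D -> exists2 v, v \in D & edge u v.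

From mathcomp Require Import all_boot all_order all_algebra all_fingroup.
From mathcomp Require Import zify ring.
Import Order.TTheory GRing.Theory Num.Theory.
Set Implicit Arguments. Unset Strict Implicit. Unset Printing Implicit Defensive.

(* Group permutations by their first n-3 entries; each class has at most
   3! = 6 elements. An edge u -> v moves every value at most one place later,
   so the set of the first k+1 entries of u is either that of v, or the set of
   the first k entries of u plus the (k+1)-th entry of v. Hence the first n-3
   entries of an in-neighbour of v are determined by n-3 bits, and the closed
   in-neighbourhood of v meets at most 2^(n-3) classes. On the other hand every
   class meets the closed in-neighbourhoods of two distinct members of D: a
   member of the class with the last entry of v among its first n-2 positions
   is not an in-neighbour of v. Double counting gives
   2 n! <= 6 2^(n-3) |D|. *)

Lemma leq_card_imset_determined (T T1 T2 : finType) (B : {set T})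
    (f : T -> T1) (g : T -> T2) :
  {in B &, forall x y, g x = g y -> f x = f y} -> #|f @: B| <= #|g @: B|.
Proof.
move=> gf; have [->|[x0 x0B]] := set_0Vmem B; first by rewrite !imset0 cards0.
pose h z := f (odflt x0 [pick x in B | g x == z]).
suff -> : f @: B = h @: (g @: B) by apply: leq_imset_card.
rewrite -imset_comp; apply: eq_in_imset => x xB /=; rewrite /h.
case: pickP => [y /andP [yB /eqP gy] | /(_ x)]; last by rewrite xB eqxx.
exact: gf.
Qed.

Lemma leq_card_fibers (T K : finType) (f : T -> K) c :
  (forall t, #|[set t' | f t' == f t]| <= c) -> #|T| <= c * #|f @: T|.
Proof.
move=> fiber_le; rewrite mulnC -sum_nat_const -sum1_card.
rewrite (partition_big f (mem (f @: T))) => [|t _]; last exact: imset_f.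
apply: leq_sum => _ /imsetP [t _ ->]; rewrite sum1dep_card.
apply: leq_trans (fiber_le t).
by apply: subset_leq_card; apply/subsetP => t'; rewrite !inE.
Qed.

Lemma leq_card_double_cover (T K V : finType) (f : T -> K)
    (N : V -> {set T}) (D : {set V}) c b :
  (forall t, #|[set t' | f t' == f t]| <= c) ->
  (forall v, #|f @: N v| <= b) ->
  (forall t, 1 < #|[set v in D | f t \in f @: N v]|) ->
  2 * #|T| <= c * (b * #|D|).
Proof.
move=> fiber_le image_le covered_twice.
have twice_classes : 2 * #|f @: T| <= #|D| * b.
  apply: (@leq_trans (\sum_(k in f @: T) #|[set v in D | k \in f @: N v]|)).
    rewrite mulnC -sum_nat_const; apply: leq_sum => _ /imsetP [t _ ->].
    exact: covered_twice.
  rewrite -sum_nat_const.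
  under eq_bigr do rewrite -sum1dep_card.
  rewrite (exchange_big_dep (mem D)) => [|k v _]; last by rewrite inE => /andP [].
  apply: leq_sum => v vD; rewrite sum1dep_card.
  apply: leq_trans (image_le v); apply: subset_leq_card.
  by apply/subsetP => k; rewrite inE => /and3P [].
apply: (@leq_trans (c * (2 * #|f @: T|))).
  by rewrite mulnCA leq_mul2l leq_card_fibers.
by rewrite leq_mul2l (mulnC b) twice_classes orbT.
Qed.

Lemma card_ord_geq n m : m <= n -> #|[set i : 'I_n | m <= i]| = n - m.
Proof.
move=> le_m_n.
have low : [set i : 'I_n | i < m] = widen_ord le_m_n @: [set: 'I_m].
  apply/setP => i; rewrite inE; apply/idP/imsetP => [im | [j _ ->] /=]; last exact: ltn_ord.
  by exists (Ordinal im); rewrite ?inE //; apply: val_inj.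
have -> : [set i : 'I_n | m <= i] = ~: [set i : 'I_n | i < m].
  by apply/setP => i; rewrite !inE -leqNgt.
have := cardsC [set i : 'I_n | i < m].
rewrite {1}low card_imset ?cardsT ?card_ord; last by move=> i j /(congr1 val) /= /val_inj.
lia.
Qed.

Section Positions.

Variable n : nat.
Implicit Types (u v : 'S_n) (x : 'I_n).

Definition position u x : nat := (u^-1)%g x.

Lemma position_perm u (i : 'I_n) : position u (u i) = i.
Proof. by rewrite /position permK. Qed.

Lemma position_inj u : injective (position u).
Proof. by move=> x y /val_inj /perm_inj. Qed.

Definition prefix_set k u := [set x | position u x < k].

Lemma prefix_setE k u : prefix_set k u = u @: [set i : 'I_n | i < k].
Proof.
apply/setP => x; rewrite inE; apply/idP/imsetP => [xk | [i ik ->]].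
  by exists ((u^-1)%g x); rewrite ?inE // permKV.
by rewrite position_perm; move: ik; rewrite inE.
Qed.

Lemma card_prefix_set k u v : #|prefix_set k u| = #|prefix_set k v|.
Proof. by rewrite !prefix_setE !card_imset //; apply: perm_inj. Qed.

Lemma perm_eq_at_prefix_set u u' (i : 'I_n) :
  prefix_set i u = prefix_set i u' -> prefix_set i.+1 u = prefix_set i.+1 u' ->
  u i = u' i.
Proof.
move=> eq_i eq_Si; apply: (@position_inj u'); apply/eqP.
have : u i \in prefix_set i.+1 u' by rewrite -eq_Si inE position_perm.
have : u i \notin prefix_set i u' by rewrite -eq_i inE position_perm ltnn.
by rewrite !inE position_perm ltnS -leqNgt eqn_leq => -> ->.
Qed.

Definition prefix m u : {ffun 'I_n -> option 'I_n} :=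
  [ffun i : 'I_n => if i < m then Some (u i) else None].

Definition at_most_one_later u v := forall x, position v x <= (position u x).+1.

Definition closed_in_nbhd v := [set u | (u == v) || edge u v].

Lemma closed_in_nbhd_one_later u v :
  u \in closed_in_nbhd v -> at_most_one_later u v.
Proof.
rewrite inE => /orP [/eqP -> x | uv x]; first exact: leqnSn.
have := le_bigmax 0%R (fun i => (pos v i - pos u i)%R) x.
by move: uv; rewrite /edge /cost /pos /position => /eqP ->; lia.
Qed.

End Positions.

Section PushStep.

Variables (n : nat) (u v : 'S_n).
Hypothesis push_le : at_most_one_later u v.

Lemma prefix_set_succ k y : position v y = k.+1 ->
  prefix_set k.+1 u =
    if k < position u y then prefix_set k.+1 v else y |: prefix_set k u.
Proof.
move=> vy; case: ltnP => [ky | yk].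
  apply/eqP; rewrite eqEcard (card_prefix_set _ u v) leqnn andbT.
  apply/subsetP => x; rewrite !inE => xk.
  have xy : x != y by apply: contraTneq xk => ->; rewrite -leqNgt.
  have : position v x != k.+1 by rewrite -vy (inj_eq (@position_inj _ v)).
  by have := push_le x; lia.
have uy : position u y = k by have := push_le y; lia.
apply/setP => x; rewrite !inE ltnS leq_eqVlt -uy.
by rewrite (inj_eq (@position_inj _ u)) (ltn_neqAle (position u x)) uy; case: eqP.
Qed.

End PushStep.

Section PushBits.

Variables (n m : nat) (v : 'S_n).
Hypothesis lt_m_n : m < n.

Definition next_position (j : 'I_m) : 'I_n :=
  Ordinal (leq_ltn_trans (ltn_ord j) lt_m_n).

Definition push_bits (u : 'S_n) : {set 'I_m} :=
  [set j : 'I_m | j < position u (v (next_position j))].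

Lemma prefix_set_push_bits u u' :
  at_most_one_later u v -> at_most_one_later u' v ->
  push_bits u = push_bits u' -> forall k, k <= m -> prefix_set k u = prefix_set k u'.
Proof.
move=> push_u push_u' bits_eq; elim=> [_ | k IHk km].
  by apply/setP => x; rewrite !inE.
have vy : position v (v (next_position (Ordinal km))) = k.+1 by rewrite position_perm.
have : Ordinal km \in push_bits u = (Ordinal km \in push_bits u') by rewrite bits_eq.
rewrite !inE (prefix_set_succ push_u vy) (prefix_set_succ push_u' vy) => ->.
by rewrite IHk // ltnW.
Qed.

Lemma prefix_push_bits u u' :
  at_most_one_later u v -> at_most_one_later u' v ->
  push_bits u = push_bits u' -> prefix m u = prefix m u'.
Proof.
move=> push_u push_u' bits_eq; apply/ffunP => i; rewrite !ffunE.
case: ifP => // im; congr Some.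
by apply: perm_eq_at_prefix_set; apply: prefix_set_push_bits; rewrite // ltnW.
Qed.

Lemma card_prefix_closed_in_nbhd : #|prefix m @: closed_in_nbhd v| <= 2 ^ m.
Proof.
apply: leq_trans (leq_card_imset_determined (g := push_bits) _) _.
  move=> u u' /closed_in_nbhd_one_later push_u /closed_in_nbhd_one_later push_u'.
  exact: prefix_push_bits.
apply: leq_trans (max_card _) _.
have -> : 2 ^ m = #|powerset [set: 'I_m]| by rewrite card_powerset cardsT card_ord.
by apply/subset_leq_card/subsetP => B; rewrite powersetE subsetT.
Qed.

End PushBits.

Section PrefixClasses.

Variables (n m : nat).
Implicit Types (u v w : 'S_n).

Lemma card_prefix_class w : m <= n ->
  #|[set u | prefix m u == prefix m w]| <= (n - m)`!.
Proof.
move=> le_m_n; rewrite -(card_ord_geq le_m_n) -card_perm.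
apply: leq_trans (leq_imset_card (fun s => s * w)%g _).
apply/subset_leq_card/subsetP => u; rewrite inE => /eqP same_prefix.
apply/imsetP; exists (u * w^-1)%g; last by rewrite mulgKV.
apply/subsetP => i; rewrite !inE; apply: contraR; rewrite -ltnNge => im.
have /(congr1 (fun f : {ffun _ -> _} => f i)) := same_prefix.
rewrite !ffunE im => -[uw].
by rewrite permM uw permK.
Qed.

Lemma exists_same_prefix_notin_closed_in_nbhd v w : m.+2 < n ->
  exists2 u, prefix m u = prefix m w & u \notin closed_in_nbhd v.
Proof.
move=> lt_m2_n.
pose z := v (Ordinal lt_m2_n).
pose p := (w^-1)%g z.
pose q : 'I_n := if p < m then p else Ordinal (ltnW (ltnW lt_m2_n)).
have le_q_m : q <= m by rewrite /q; case: ifP => [/ltnW|].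
exists (tperm q p * w)%g.
  apply/ffunP => i; rewrite !ffunE; case: ifP => // im; congr Some.
  rewrite permM /q; case: ifP => pm; first by rewrite tperm1 perm1.
  by rewrite tpermD // -(inj_eq val_inj) /= neq_ltn ?im ?orbT //; lia.
have uq : (tperm q p * w)%g q = z by rewrite permM tpermL /p permKV.
apply/negP => /closed_in_nbhd_one_later /(_ z).
by rewrite -{2}uq !position_perm /=; lia.
Qed.

End PrefixClasses.

Lemma dominating_closed_in_nbhd n (D : {set 'S_n}) :
  dominating D -> forall u, exists2 v, v \in D & u \in closed_in_nbhd v.
Proof.
move=> dom u; have [uD | /dom [v vD uv]] := boolP (u \in D).
  by exists u; rewrite // inE eqxx.
by exists v; rewrite // inE uv orbT.
Qed.

Lemma dominating_card_lower_bound n m (D : {set 'S_n}) : m.+2 < n ->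
  dominating D -> 2 * n`! <= (n - m)`! * (2 ^ m * #|D|).
Proof.
move=> lt_m2_n dom; rewrite -card_Sn.
apply: (leq_card_double_cover (f := prefix m) (N := @closed_in_nbhd n)).
- by move=> w; apply: card_prefix_class; lia.
- by move=> v; apply: card_prefix_closed_in_nbhd; lia.
move=> u; have [v0 v0D uv0] := dominating_closed_in_nbhd dom u.
have [u' same_prefix u'v0] := exists_same_prefix_notin_closed_in_nbhd v0 u lt_m2_n.
have [v1 v1D u'v1] := dominating_closed_in_nbhd dom u'.
apply/card_gt1P; exists v0, v1; rewrite !inE v0D v1D (imset_f _ uv0) -same_prefix.
by rewrite (imset_f _ u'v1); split=> //; apply: contraNneq u'v0 => ->.
Qed.

Local Open Scope ring_scope.

Theorem theorem4 (n : nat) (hn : (3 <= n)%N) (D : {set 'S_n}) :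
  dominating D ->
  (n`!)%:R / ((3%:R / 4%:R) * 2%:R ^+ n.-1) <= (#|D|)%:R :> rat.
Proof.
move=> dom; have := dominating_card_lower_bound (m := n - 3) _ dom.
rewrite subKn // => /(_ ltac:(lia)); set p := (2 ^ (n - 3))%N => bound.
have -> : n.-1 = (n - 3).+2 by lia.
rewrite ler_pdivrMr; last by rewrite mulr_gt0 ?exprn_gt0 ?divr_gt0 ?ltr0n.
have -> : (3%:R / 4%:R * 2%:R ^+ (n - 3).+2 : rat) = (3 * p)%:R.
  by rewrite !exprS -natrX !natrM; field.
by rewrite -natrM ler_nat; move: bound; rewrite (_ : 3`! = 6)%N //; lia.
Qed.
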